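(* Let $F:\mathbf{C}\rightleftarrows\mathbf{D}:G$ be an adjunction ($F$ left adjoint to $G$). (a) Assume that $\mathrm{Aut}(F(\mathcal{A}))=F(\mathrm{Aut}(\mathcal{A}))$ for every object $\mathcal{A}$ of $\mathbf{C}$. If $\mathbf{D}$ has the Ramsey property for objects, then so does $\mathbf{C}$. (b) Assume that $\mathrm{Aut}(G(\mathcal{B}))=G(\mathrm{Aut}(\mathcal{B}))$ for every object $\mathcal{B}$ of $\mathbf{D}$. If $\mathbf{C}$ has the dual Ramsey property for objects, then so does $\mathbf{D}$.
   Context: For objects $\mathcal{A},\mathcal{B}$ of a category, $\hom(\mathcal{A},\mathcal{B})$ is the set of morphisms $\mathcal{A}\to\mathcal{B}$; write $\mathcal{A}\to\mathcal{B}$ if it is nonempty. $\mathrm{Aut}(\mathcal{A})$ is the set of invertible morphisms $\mathcal{A}\to\mathcal{A}$, and $F(\mathrm{Aut}(\mathcal{A}))=\{F(\alpha):\alpha\in\mathrm{Aut}(\mathcal{A})\}$. On $\hom(\mathcal{A},\mathcal{B})$ let $f\sim_\mathcal{A} f'$ iff $f'=f\cdot\alpha$ for some $\alpha\in\mathrm{Aut}(\mathcal{A})$, and put $\binom{\mathcal{B}}{\mathcal{A}}=\hom(\mathcal{A},\mathcal{B})/\sim_\mathcal{A}$; for $w:\mathcal{B}\to\mathcal{C}$ set $w\cdot(f/\sim_\mathcal{A})=(w\cdot f)/\sim_\mathcal{A}$. A $k$-coloring of a set $S$ is a decomposition $S=\mathcal{M}_1\cup\dots\cup\mathcal{M}_k$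 into pairwise disjoint sets. For $k\ge2$, $\mathcal{C}\longrightarrow(\mathcal{B})^{\mathcal{A}}_k$ means $\mathcal{A}\to\mathcal{B}\to\mathcal{C}$ and for every $k$-coloring of $\binom{\mathcal{C}}{\mathcal{A}}$ there are $i$ and $w:\mathcal{B}\to\mathcal{C}$ with $w\cdot\binom{\mathcal{B}}{\mathcal{A}}\subseteq\mathcal{M}_i$. A category has the Ramsey property for objects if for every $k\ge2$ and all objects $\mathcal{A}\to\mathcal{B}$ there is an object $\mathcal{C}$ with $\mathcal{C}\longrightarrow(\mathcal{B})^{\mathcal{A}}_k$. A category $\mathbf{C}$ has the dual Ramsey property for objects if $\mathbf{C}^{\mathrm{op}}$ has the Ramsey property for objects. *)

Set Implicit Arguments.
Unset Strict Implicit.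

(* A (locally small) category; [comp g f] is  g . f  ("g after f"). *)
Record Category := {
  Ob :> Type;
  Hom : Ob -> Ob -> Type;
  comp : forall {x y z : Ob}, Hom y z -> Hom x y -> Hom x z;
  idm : forall a : Ob, Hom a a;
  comp_assoc : forall a b c d (h : Hom c d) (g : Hom b c) (f : Hom a b),
      comp h (comp g f) = comp (comp h g) f;
  comp_id_l : forall a b (f : Hom a b), comp (idm b) f = f;
  comp_id_r : forall a b (f : Hom a b), comp f (idm a) = f
}.

Arguments Hom {_} _ _.
Arguments comp {_ x y z} _ _.
Arguments idm {_} _.

Definition Op (C : Category) : Category.
Proof.
  refine {| Ob := Ob C;
            Hom := fun a b => @Hom C b a;
            comp := fun a b c g f => comp f g;
            idm := fun a => idm a |}.
  - intros; symmetry; apply comp_assoc.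
  - intros; apply comp_id_r.
  - intros; apply comp_id_l.
Defined.

Record Functor (C D : Category) := {
  fobj :> Ob C -> Ob D;
  fmap : forall {a b : Ob C}, Hom a b -> Hom (fobj a) (fobj b);
  fmap_id : forall a, fmap (idm a) = idm (fobj a);
  fmap_comp : forall a b c (g : Hom b c) (f : Hom a b),
      fmap (comp g f) = comp (fmap g) (fmap f)
}.

Arguments fmap {C D} _ {a b} _.

Record Adjunction (C D : Category) (F : Functor C D) (G : Functor D C) := {
  adj_phi : forall (a : Ob C) (b : Ob D), Hom (F a) b -> Hom a (G b);
  adj_psi : forall (a : Ob C) (b : Ob D), Hom a (G b) -> Hom (F a) b;
  adj_psi_phi : forall a b (h : Hom (F a) b), adj_psi (adj_phi h) = h;
  adj_phi_psi : forall a b (k : Hom a (G b)), adj_phi (adj_psi k) = k;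
  adj_natural : forall (a a' : Ob C) (b b' : Ob D)
      (f : Hom a' a) (g : Hom b b') (h : Hom (F a) b),
      adj_phi (comp g (comp h (fmap F f))) = comp (fmap G g) (comp (adj_phi h) f)
}.

Definition is_iso (C : Category) (a b : Ob C) (f : Hom a b) : Prop :=
  exists g : Hom b a, comp g f = idm a /\ comp f g = idm b.

Definition aut_preserved (C D : Category) (F : Functor C D) : Prop :=
  forall (a : Ob C) (beta : Hom (F a) (F a)),
    is_iso beta <-> exists alpha : Hom a a, is_iso alpha /\ beta = fmap F alpha.

Definition arrows (C : Category) (a b : Ob C) : Prop := inhabited (Hom a b).

(* A k-coloring of (C choose A) = hom(A,C)/~_A: a map from hom(A,C) to colors
   {0,..,k-1} that is constant on ~_A-classes, where f ~_A f . alpha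
   for alpha in Aut(A). (Color classes M_i = preimages of i.) *)
Definition coloring (C : Category) (k : nat) (a c : Ob C) (col : Hom a c -> nat) : Prop :=
  (forall f, col f < k) /\
  (forall (f : Hom a c) (alpha : Hom a a), is_iso alpha -> col (comp f alpha) = col f).

Definition erdos_rado_arrow (Cat : Category) (k : nat) (c b a : Ob Cat) : Prop :=
  arrows a b /\ arrows b c /\
  forall col : Hom a c -> nat, coloring k col ->
    exists (i : nat) (w : Hom b c), forall f : Hom a b, col (comp w f) = i.

Definition ramsey_property (Cat : Category) : Prop :=
  forall (k : nat), 2 <= k -> forall a b : Ob Cat, arrows a b ->
    exists c : Ob Cat, erdos_rado_arrow k c b a.

Definition dual_ramsey_property (Cat : Category) : Prop :=
  ramsey_property (Op Cat).

(** Transposition along the adjunction, [w |-> phi w], sends [f : A -> B]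
    composed with [w : F B -> C] to [phi w . f].  A coloring of
    [hom(A, G C)] therefore pulls back to a coloring of [hom(F A, C)]; it
    is invariant under [Aut(F A)] exactly because every such automorphism
    is [F alpha] with [alpha] in [Aut A].  A monochromatic copy [w] of [F B]
    in [C] transposes to a monochromatic copy [phi w] of [B] in [G C].
    Part (b) is part (a) for the opposite adjunction [G^op -| F^op]. *)

Set Implicit Arguments.
Unset Strict Implicit.

Section AdjunctionNaturality.

Variables (C D : Category) (F : Functor C D) (G : Functor D C).
Variable adj : Adjunction F G.

Lemma adj_phi_natural_l (a a' : Ob C) (b : Ob D) (h : Hom (F a) b) (f : Hom a' a) :
  adj_phi adj (comp h (fmap F f)) = comp (adj_phi adj h) f.
Proof.
  pose proof (adj_natural adj f (idm b) h) as H.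
  rewrite comp_id_l, fmap_id, comp_id_l in H; exact H.
Qed.

Lemma adj_psi_natural (a a' : Ob C) (b b' : Ob D)
    (f : Hom a' a) (g : Hom b b') (k : Hom a (G b)) :
  adj_psi adj (comp (fmap G g) (comp k f)) = comp g (comp (adj_psi adj k) (fmap F f)).
Proof.
  pose proof (adj_natural adj f g (adj_psi adj k)) as H.
  rewrite adj_phi_psi in H.
  rewrite <- H, adj_psi_phi; reflexivity.
Qed.

End AdjunctionNaturality.

Definition op_functor {C D : Category} (F : Functor C D) : Functor (Op C) (Op D).
Proof.
  refine {| fobj := fobj F : Ob (Op C) -> Ob (Op D);
            fmap := fun (a b : Ob C) (f : @Hom C b a) => fmap F f |}.
  - intro a; exact (fmap_id F a).
  - intros a b c g f; exact (fmap_comp F f g).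
Defined.

Definition op_adjunction {C D : Category} (F : Functor C D) (G : Functor D C)
    (adj : Adjunction F G) : Adjunction (op_functor G) (op_functor F).
Proof.
  unshelve refine {| adj_phi := _; adj_psi := _ |}.
  - intros b a k; change (@Hom C a (G b)) in k; exact (adj_psi adj k).
  - intros b a h; change (@Hom D (F a) b) in h; exact (adj_phi adj h).
  - intros b a k; exact (adj_phi_psi adj k).
  - intros b a h; exact (adj_psi_phi adj h).
  - intros b b' a a' g f k; simpl.
    rewrite <- comp_assoc, adj_psi_natural, comp_assoc; reflexivity.
Defined.

Lemma is_iso_op (C : Category) (a : Ob C) (f : Hom a a) :
  is_iso (C := Op C) f <-> is_iso f.
Proof.
  split; intros [g [Hl Hr]]; exists g; split; assumption.
Qed.

Lemma aut_preserved_op (C D : Category) (F : Functor C D) :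
  aut_preserved F -> aut_preserved (op_functor F).
Proof.
  intros HF a beta; split.
  - intro Hbeta; apply is_iso_op, HF in Hbeta as [alpha [Halpha ->]].
    exists alpha; split; [apply is_iso_op; exact Halpha | reflexivity].
  - intros [alpha [Halpha ->]]; apply is_iso_op, HF.
    exists alpha; split; [apply is_iso_op; exact Halpha | reflexivity].
Qed.

Section LeftAdjointRamsey.

Variables (C D : Category) (F : Functor C D) (G : Functor D C).
Variable adj : Adjunction F G.
Hypothesis F_aut : aut_preserved F.

Lemma coloring_adj_phi (k : nat) (a : Ob C) (c : Ob D) (col : Hom a (G c) -> nat) :
  coloring k col -> coloring k (fun h : Hom (F a) c => col (adj_phi adj h)).
Proof.
  intros [Hlt Hinv]; split; [intro h; apply Hlt |].
  intros h beta Hbeta.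
  apply F_aut in Hbeta as [alpha [Halpha ->]].
  rewrite adj_phi_natural_l; apply Hinv; exact Halpha.
Qed.

Lemma erdos_rado_arrow_adj (k : nat) (a b : Ob C) (c : Ob D) :
  arrows a b -> erdos_rado_arrow k c (F b) (F a) -> erdos_rado_arrow k (G c) b a.
Proof.
  intros Hab [_ [[w0] Hc]].
  split; [exact Hab |]; split; [exact (inhabits (adj_phi adj w0)) |].
  intros col Hcol.
  destruct (Hc _ (coloring_adj_phi Hcol)) as [i [w Hw]].
  exists i, (adj_phi adj w); intro f.
  rewrite <- adj_phi_natural_l; apply Hw.
Qed.

Lemma ramsey_property_left_adjoint : ramsey_property D -> ramsey_property C.
Proof.
  intros HD k Hk a b [f].
  destruct (HD k Hk (F a) (F b) (inhabits (fmap F f))) as [c Hc].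
  exists (G c); exact (erdos_rado_arrow_adj (inhabits f) Hc).
Qed.

End LeftAdjointRamsey.

Theorem lemma3p2 (C D : Category) (F : Functor C D) (G : Functor D C)
  (adj : Adjunction F G) :
  (aut_preserved F -> ramsey_property D -> ramsey_property C) /\
  (aut_preserved G -> dual_ramsey_property C -> dual_ramsey_property D).
Proof.
  split.
  - intro HF; exact (ramsey_property_left_adjoint adj HF).
  - intro HG; exact (ramsey_property_left_adjoint (op_adjunction adj) (aut_preserved_op HG)).
Qed.
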